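(* Let $\mathfrak{g}$ be a Lie algebra with structure constants $c^\alpha_{\beta\gamma}$ in a basis $\{e_\alpha\}$. Suppose that an $\mathrm{End}(\mathfrak{g})$-valued vector field $\xi^\alpha_\beta{}^j$ on Minkowski space satisfies \[\partial^{(i}\xi^{|\alpha|}_\beta{}^{j)}=\eta^{ij}k^\alpha_\beta,\qquad \xi^\alpha_\beta{}^jc^\beta_{\gamma\delta}+c^\alpha_{\beta\gamma}\xi^\beta_\delta{}^j=0\] for some functions $k^\alpha_\beta$. Then $Q^\alpha_i=\xi^\alpha_\beta{}^jF^\beta_{ij}$ are the components of a first order generalized symmetry of the Yang-Mills equations.
   Context: Minkowski space has coordinates $x^i$, $i=0,\dots,3$, metric $\eta=\mathrm{diag}(-1,1,1,1)$ (used to raise/lower indices); round brackets denote symmetrization, with $|\alpha|$ excluded. $[e_\beta,e_\gamma]=c^\alpha_{\beta\gamma}e_\alpha$. Jet coordinates $x^i,a^\alpha_i,a^\alpha_{i,j_1},\dots$ for $\mathfrak{g}$-valued potentials $a^\alpha_i$; differential functions are smooth functions of finitely many jet coordinates; $D_i$ is the total derivative; $\nabla_iG^\alpha=D_iG^\alpha+c^\alpha_{\beta\gamma}a^\beta_iG^\gamma$; $[G,H]^\alpha=c^\alpha_{\beta\gamma}G^\beta H^\gamma$. Field tensor $F^\alpha_{ij}=a^\alpha_{j,i}-a^\alpha_{i,j}+c^\alpha_{\beta\gamma}a^\beta_ia^\gamma_j$; Yang-Mills equations $\nabla^jF_{ij}=0$, with $p$-fold prolonged solution manifold $\mathcal R^p$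 defined by $\nabla_{i_1}\cdots\nabla_{i_r}\nabla^jF_{i_{r+1}j}=0$, $0\le r\le p$. A generalized symmetry of order $p$ is a collection of $\mathfrak{g}$-valued differential functions $Q^\alpha_i$ of order $p$ with $\nabla^j\nabla_iQ_j-\nabla^j\nabla_jQ_i-[F_i{}^j,Q_j]=0$ on $\mathcal R^p$. *)

From HB Require Import structures.
From mathcomp Require Import all_boot all_order all_algebra.
From mathcomp Require Import all_classical all_reals all_analysis.
Set Implicit Arguments. Unset Strict Implicit. Unset Printing Implicit Defensive.
Import Order.TTheory GRing.Theory Num.Theory.
Import numFieldNormedType.Exports.
Local Open Scope ring_scope.

Section Jets.
Variables (R : realType) (n : nat).

Definition mink (i j : 'I_4) : R :=
  if i == j then (if (i : nat) == 0%N then -1 else 1) else 0.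

(* Lie algebra structure constants: [e_b, e_g] = c a b g e_a *)
Definition lie_structure (c : 'I_n -> 'I_n -> 'I_n -> R) : Prop :=
  (forall a b g, c a b g = - c a g b) /\
  (forall a b g d,
     \sum_(e < n) (c a b e * c e g d + c a g e * c e d b + c a d e * c e b g) = 0).

Definition partial (i : 'I_4) (f : 'rV[R]_4 -> R) : 'rV[R]_4 -> R :=
  fun x => derive f x (delta_mx 0 i).

Fixpoint iter_partial (l : seq 'I_4) (f : 'rV[R]_4 -> R) : 'rV[R]_4 -> R :=
  if l is i :: l' then partial i (iter_partial l' f) else f.

Definition smooth (f : 'rV[R]_4 -> R) : Prop :=
  forall (l : seq 'I_4) (x : 'rV[R]_4), differentiable (iter_partial l f) x.

(* A point of the infinite jet space: coordinates x^i and
   a^alpha_{i, j1 ... jk} = ju alpha i [:: j1; ...; jk]. *)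
Record jet := Jet { jx : 'rV[R]_4 ; ju : 'I_n -> 'I_4 -> seq 'I_4 -> R }.

Definition sym_jet (p : jet) : Prop :=
  forall a i (J J' : seq 'I_4), perm_eq J J' -> ju p a i J = ju p a i J'.

Definition dfun := jet -> R.
Definition gfun := 'I_n -> dfun.

(* total derivative D_i: derivative along the (Cartan) vector field
   d/dx^i + sum a^a_{j,J i} d/da^a_{j,J} *)
Definition Dtot (i : 'I_4) (f : dfun) : dfun := fun p =>
  derive1 (fun t : R => f (Jet (jx p + t *: delta_mx 0 i)
                              (fun a j J => ju p a j J + t * ju p a j (i :: J)))) 0.

Variable c : 'I_n -> 'I_n -> 'I_n -> R.

Definition nabla (i : 'I_4) (G : gfun) : gfun := fun a p =>
  Dtot i (G a) p + \sum_(b < n) \sum_(g < n) c a b g * ju p b i [::] * G g p.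

Definition nablas (l : seq 'I_4) (G : gfun) : gfun := foldr nabla G l.

Definition Fld (i j : 'I_4) : gfun := fun a p =>
  ju p a j [:: i] - ju p a i [:: j]
  + \sum_(b < n) \sum_(g < n) c a b g * ju p b i [::] * ju p g j [::].

Definition YM (i : 'I_4) : gfun := fun a p =>
  \sum_(j < 4) mink j j * nabla j (Fld i j) a p.

Definition on_Rp (k : nat) (p : jet) : Prop :=
  forall (l : seq 'I_4), (size l <= k)%N ->
  forall i a, nablas l (YM i) a p = 0.

Definition order_le (k : nat) (f : dfun) : Prop :=
  forall p1 p2 : jet, jx p1 = jx p2 ->
  (forall a i (J : seq 'I_4), (size J <= k)%N -> ju p1 a i J = ju p2 a i J) ->
  f p1 = f p2.

Definition linYM (Q : 'I_4 -> gfun) (i : 'I_4) : gfun := fun a p =>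
  \sum_(j < 4) mink j j * nabla j (nabla i (fun b => Q j b)) a p
  - \sum_(j < 4) mink j j * nabla j (nabla j (fun b => Q i b)) a p
  - \sum_(j < 4) \sum_(b < n) \sum_(g < n)
      c a b g * (mink j j * Fld i j b p) * Q j g p.

(* generalized symmetry of order k; Q i a = Q^a_i *)
Definition gen_symmetry (k : nat) (Q : 'I_4 -> gfun) : Prop :=
  (forall i a, order_le k (Q i a)) /\
  (forall p : jet, sym_jet p -> on_Rp k p -> forall i a, linYM Q i a p = 0).

End Jets.

(* The symmetry is Q = xi . F, where the endomorphism field xi commutes with
   ad and hence with the gauge-covariant derivative up to its own partial
   derivatives: nabla (xi . G) = (d xi) . G + xi . nabla G.  The linearized
   Yang-Mills operator applied to Q therefore splits into three groups.
   - xi applied to the linearized operator of F_{.k}; this vanishes on solutions,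
     since F_{.k} is the symmetry generated by translations (Bianchi and Ricci
     identities plus the field equations and their first prolongation).
   - Terms linear in the first derivatives of xi; they cancel by the conformal
     Killing equation combined with the Bianchi identity and the field equations.
   - Terms in the second derivatives of xi; these are determined by the gradient
     of k, and the resulting contraction with F vanishes identically.
   Differential functions are handled as polynomials in the jet coordinates with
   smooth coefficients; for those, the total derivative satisfies the Leibniz
   rule and total derivatives commute (by Schwarz's theorem). *)

From HB Require Import structures.
From mathcomp Require Import all_boot all_order all_algebra.
From mathcomp Require Import all_classical all_reals all_analysis.
From mathcomp Require Import ring.
Set Implicit Arguments. Unset Strict Implicit. Unset Printing Implicit Defensive.
Import Order.TTheory GRing.Theory Num.Theory.
Import numFieldNormedType.Exports.
Local Open Scope ring_scope.

Section Schwarz.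
Variables (R : realType) (V : normedModType R).
Implicit Types (f : V -> R) (u v x y : V).
Local Open Scope classical_set_scope.

Lemma is_derive_along_line f y v (s : R) :
  derivable f (s *: v + y) v ->
  is_derive s 1 (fun t => f (t *: v + y)) ('D_v f (s *: v + y)).
Proof.
move=> df.
have E : (fun h : R => h^-1 *: (((fun t => f (t *: v + y)) \o shift s) (h *: 1)
           - f (s *: v + y)))
       = (fun h : R => h^-1 *: ((f \o shift (s *: v + y)) (h *: v) - f (s *: v + y))).
  by apply: funext => h /=; rewrite /shift /= [h *: 1]mulr1 scalerDl addrA.
by split; [rewrite /derivable E | rewrite /derive E].
Qed.

Lemma derivable_lin (r s : R) f g x v : derivable f x v -> derivable g x v ->
  derivable (fun y => r * f y + s * g y) x v.
Proof.
move=> df dg.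
have -> : (fun y => r * f y + s * g y) = r \*: f + s \*: g :> (V -> R^o) by apply: funext.
exact: derivableD (derivableZ df) (derivableZ dg).
Qed.

Lemma derive_lin (r s : R) f g x v : derivable f x v -> derivable g x v ->
  'D_v (fun y => r * f y + s * g y) x = r * 'D_v f x + s * 'D_v g x.
Proof.
move=> df dg.
have -> : (fun y => r * f y + s * g y) = r \*: f + s \*: g :> (V -> R^o) by apply: funext.
by rewrite (deriveD (derivableZ df) (derivableZ dg)) !deriveZ.
Qed.

Lemma MVT_along_line f v y (h : R) : 0 <= h -> (forall z, differentiable f z) ->
  exists2 s, s \in `[0, h]%R &
    f (h *: v + y) - f (0 *: v + y) = 'D_v f (s *: v + y) * h.
Proof.
move=> h0 df.
have D s : is_derive s (1 : R) (fun t => f (t *: v + y)) ('D_v f (s *: v + y)).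
  exact/is_derive_along_line/diff_derivable.
have C : {within `[0, h], continuous (fun t => f (t *: v + y))}.
  apply: continuous_subspaceT => s; apply/differentiable_continuous/derivable1_diffP.
  exact: (@ex_derive _ _ _ _ _ _ _ (D s)).
have [s hs] := MVT_segment h0 (fun s _ => D s) C.
by rewrite subr0; exists s.
Qed.

Lemma MVT_along_line_diff f v y1 y2 (h : R) : 0 <= h ->
  (forall z, differentiable f z) ->
  exists2 s, s \in `[0, h]%R &
    (f (h *: v + y1) - f (h *: v + y2)) - (f (0 *: v + y1) - f (0 *: v + y2))
    = ('D_v f (s *: v + y1) - 'D_v f (s *: v + y2)) * h.
Proof.
move=> h0 df.
pose F t := f (t *: v + y1) - f (t *: v + y2).
have D s : is_derive s (1 : R) F ('D_v f (s *: v + y1) - 'D_v f (s *: v + y2)).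
  by apply: is_deriveB; apply/is_derive_along_line/diff_derivable.
have C : {within `[0, h], continuous F}.
  apply: continuous_subspaceT => s; apply/differentiable_continuous/derivable1_diffP.
  exact: (@ex_derive _ _ _ _ _ _ _ (D s)).
have [s hs] := MVT_segment h0 (fun s _ => D s) C.
by rewrite subr0; exists s.
Qed.

(* Both mixed partials are read off the same second difference
   [f (x + h u + h v) - f (x + h u) - f (x + h v) + f x] by two applications of
   the mean value theorem. *)
Lemma second_difference_mean_value f u v x (h : R) : 0 < h ->
  (forall z, differentiable f z) ->
  (forall z, differentiable ('D_u f) z) -> (forall z, differentiable ('D_v f) z) ->
  exists z1, exists z2,
    [/\ `|x - z1| <= h * (`|u| + `|v|), `|x - z2| <= h * (`|u| + `|v|) &
        'D_v ('D_u f) z1 = 'D_u ('D_v f) z2].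
Proof.
move=> h0 df dfu dfv; have h0' := ltW h0.
have [s1 hs1 E1] := MVT_along_line_diff u (h *: v + x) (0 *: v + x) h0' df.
have [s2 hs2 E2] := MVT_along_line v (s1 *: u + x) h0' dfu.
have [t1 ht1 F1] := MVT_along_line_diff v (h *: u + x) (0 *: u + x) h0' df.
have [t2 ht2 F2] := MVT_along_line u (t1 *: v + x) h0' dfv.
exists (s2 *: v + (s1 *: u + x)), (t2 *: u + (t1 *: v + x)).
have near_x (a b : R) (w w' : V) : a \in `[0, h]%R -> b \in `[0, h]%R ->
    `|x - (a *: w + (b *: w' + x))| <= h * (`|w'| + `|w|).
  rewrite !in_itv /= => /andP[a0 ah] /andP[b0 bh].
  rewrite addrA opprD addrCA subrr addr0 normrN.
  apply: (le_trans (ler_normD _ _)); rewrite !normrZ mulrDr addrC.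
  by apply: lerD; apply: ler_wpM2r; rewrite ?ger0_norm.
split; [exact: near_x | by rewrite (addrC `|u|); exact: near_x |].
rewrite (addrCA (s1 *: u)) (addrCA (s1 *: u) (0 *: v)) E2 !scale0r !add0r in E1.
rewrite (addrCA (t1 *: v)) (addrCA (t1 *: v) (0 *: u)) F2 !scale0r !add0r in F1.
rewrite (addrCA (h *: v) (h *: u)) in F1.
have hh : h * h != 0 by rewrite mulf_neq0 ?lt0r_neq0.
have second_diff (A B C D P Q : R) :
    A - B - (C - D) = P * h * h -> A - C - (B - D) = Q * h * h -> P = Q.
  by rewrite -!mulrA => EP EQ; apply: (mulIf hh); rewrite -EP -EQ; ring.
exact: second_diff E1 F1.
Qed.

Lemma schwarz f u v x :
  (forall z, differentiable f z) ->
  (forall z, differentiable ('D_u f) z) -> (forall z, differentiable ('D_v f) z) ->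
  differentiable ('D_v ('D_u f)) x -> differentiable ('D_u ('D_v f)) x ->
  'D_v ('D_u f) x = 'D_u ('D_v f) x.
Proof.
move=> df dfu dfv /differentiable_continuous/cvgrPdist_lt cvu.
move=> /differentiable_continuous/cvgrPdist_lt cuv.
apply/eqP; rewrite -subr_eq0 -normr_le0; apply/ler_addgt0Pr => e e0.
have e20 : 0 < e / 2 by rewrite divr_gt0.
have /nbhs_ballP[d1 d10 B1] := cvu _ e20.
have /nbhs_ballP[d2 d20 B2] := cuv _ e20.
pose d := Num.min d1 d2; pose M := `|u| + `|v| + 1.
have d0 : 0 < d by rewrite lt_min d10 d20.
have M0 : 0 < M by rewrite ltr_wpDl ?addr_ge0.
have h0 : 0 < d / M by rewrite divr_gt0.
have [z1 [z2 [xz1 xz2 E]]] := second_difference_mean_value x h0 df dfu dfv.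
have close z : `|x - z| <= d / M * (`|u| + `|v|) -> `|x - z| < d.
  move=> /le_lt_trans; apply.
  by rewrite mulrAC (ltr_pdivrMr _ _ M0) (ltr_pM2l d0) ltrDl ltr01.
have L1 : `|'D_v ('D_u f) x - 'D_v ('D_u f) z1| < e / 2.
  by apply: B1; rewrite -ball_normE /ball_ /=; apply: (lt_le_trans (close _ xz1)); rewrite ge_min lexx.
have L2 : `|'D_u ('D_v f) x - 'D_u ('D_v f) z2| < e / 2.
  by apply: B2; rewrite -ball_normE /ball_ /=; apply: (lt_le_trans (close _ xz2)); rewrite ge_min lexx orbT.
have tri (a b c : R) : `|a - c| < e / 2 -> `|b - c| < e / 2 -> `|a - b| <= e.
  move=> ac bc; rewrite (splitr e); apply/ltW/(le_lt_trans _ (ltrD ac bc)).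
  by rewrite -(subrKA c) -(opprB b c); apply: ler_normB.
by rewrite add0r; apply: tri L2; rewrite -E.
Qed.

End Schwarz.

Section Partial.
Variable R : realType.
Implicit Types (f g : 'rV[R]_4 -> R) (x : 'rV[R]_4).

Lemma smooth_differentiable f x : smooth f -> differentiable f x.
Proof. by move=> sf; apply: (sf [::]). Qed.

Lemma smooth_partial i f : smooth f -> smooth (partial i f).
Proof.
have iter_rcons l : iter_partial l (partial i f) = iter_partial (rcons l i) f.
  by elim: l => //= j l ->.
by move=> sf l x; rewrite iter_rcons; apply: sf.
Qed.

Lemma partialC i j f x : smooth f -> partial i (partial j f) x = partial j (partial i f) x.
Proof.
move=> sf; apply: schwarz => [z|z|z||]; last 2 first.
- exact: (sf [:: i; j]).
- exact: (sf [:: j; i]).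
- exact: smooth_differentiable.
- exact/smooth_differentiable/smooth_partial.
- exact/smooth_differentiable/smooth_partial.
Qed.

Lemma partial_cst (r : R) i x : partial i (fun _ => r) x = 0.
Proof. exact: (@derive_cst R 'rV[R]_4 R^o). Qed.

Lemma partial_sum m (F : 'I_m -> 'rV[R]_4 -> R) i x :
  (forall k, derivable (F k) x (delta_mx 0 i)) ->
  partial i (fun y => \sum_(k < m) F k y) x = \sum_(k < m) partial i (F k) x.
Proof. by move=> dF; rewrite /partial -fct_sumE (@derive_sum R 'rV[R]_4 R^o). Qed.

Lemma partial_lin (r s : R) f g i x : differentiable f x -> differentiable g x ->
  partial i (fun y => r * f y + s * g y) x = r * partial i f x + s * partial i g x.
Proof. by move=> df dg; apply: derive_lin; exact: diff_derivable. Qed.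

End Partial.

Section Jets.
Variables (R : realType) (n : nat).
Local Notation jet := (jet R n).
Local Notation dfun := (dfun R n).

(* [Dtot i f p] is the derivative of [f] along [cartan_line p i] at [0]. *)
Definition cartan_line (p : jet) (i : 'I_4) (t : R) : jet :=
  Jet (jx p + t *: delta_mx 0 i) (fun a j J => ju p a j J + t * ju p a j (i :: J)).

Lemma cartan_line0 p i : cartan_line p i 0 = p.
Proof.
case: p => x u; rewrite /cartan_line /= scale0r addr0; congr Jet.
by do 3!apply: funext => ?; rewrite mul0r addr0.
Qed.

Lemma sym_jet_cartan_line p i t : sym_jet p -> sym_jet (cartan_line p i t).
Proof.
move=> sp a j J J' pJ /=.
by rewrite (sp a j J J' pJ) (sp a j (i :: J) (i :: J')) // perm_cons.
Qed.

Lemma Dtot_sym (f g : dfun) i p :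
  (forall q, sym_jet q -> f q = g q) -> sym_jet p -> Dtot i f p = Dtot i g p.
Proof.
move=> fg sp; rewrite /Dtot; congr (derive1 _ 0); apply: funext => t.
exact/fg/sym_jet_cartan_line.
Qed.

(* Differential polynomials with coefficients smooth in x; on them the total
   derivative is computed syntactically by [dterm_D]. *)
Inductive dterm :=
| DConst of R
| DJet of 'I_n & 'I_4 & seq 'I_4
| DCoef of ('rV[R]_4 -> R)
| DAdd of dterm & dterm
| DMul of dterm & dterm.

Fixpoint dterm_eval (e : dterm) (p : jet) : R :=
  match e with
  | DConst r => r
  | DJet a j J => ju p a j J
  | DCoef g => g (jx p)
  | DAdd e1 e2 => dterm_eval e1 p + dterm_eval e2 p
  | DMul e1 e2 => dterm_eval e1 p * dterm_eval e2 p
  end.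

Fixpoint dterm_D (i : 'I_4) (e : dterm) : dterm :=
  match e with
  | DConst _ => DConst 0
  | DJet a j J => DJet a j (i :: J)
  | DCoef g => DCoef (partial i g)
  | DAdd e1 e2 => DAdd (dterm_D i e1) (dterm_D i e2)
  | DMul e1 e2 => DAdd (DMul (dterm_D i e1) e2) (DMul e1 (dterm_D i e2))
  end.

Fixpoint dterm_smooth (e : dterm) : Prop :=
  match e with
  | DCoef g => smooth g
  | DAdd e1 e2 | DMul e1 e2 => dterm_smooth e1 /\ dterm_smooth e2
  | _ => True
  end.

Lemma dterm_smooth_D i e : dterm_smooth e -> dterm_smooth (dterm_D i e).
Proof.
elim: e => //= [g|e1 IH1 e2 IH2|e1 IH1 e2 IH2]; first exact: smooth_partial.
  by move=> [/IH1 ? /IH2 ?].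
by move=> [s1 s2]; split; split=> //; [apply: IH1 | apply: IH2].
Qed.

Lemma is_derive_dterm e p i : dterm_smooth e ->
  is_derive (0 : R) 1 (fun t => dterm_eval e (cartan_line p i t))
    (dterm_eval (dterm_D i e) p).
Proof.
elim: e => /= [r _|a j J _|g sg|e1 IH1 e2 IH2 [s1 s2]|e1 IH1 e2 IH2 [s1 s2]].
- by apply: is_derive_cst.
- set u := ju p a j J; set w := ju p a j (i :: J).
  have -> : (fun t => u + t * w) = cst u + w \*: id :> (R -> R).
    by apply: funext => t; rewrite /= mulrC.
  have := is_deriveD (is_derive_cst u (0 : R) 1) (is_deriveZ w (is_derive_id (0 : R) 1)).
  by rewrite add0r [w *: 1]mulr1.
- have -> : (fun t => g (jx p + t *: delta_mx 0 i)) = (fun t => g (t *: delta_mx 0 i + jx p)).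
    by apply: funext => t; rewrite addrC.
  have := is_derive_along_line (f := g) (y := jx p) (v := delta_mx 0 i) (s := 0).
  by rewrite scale0r add0r; apply; apply/diff_derivable/smooth_differentiable.
- exact: is_deriveD (IH1 s1) (IH2 s2).
- have := is_deriveM (IH1 s1) (IH2 s2).
  rewrite /= !cartan_line0 => /(@is_derive_eq _ _ _ _ _ _ _ _).
  by apply; rewrite addrC /GRing.scale /= mulrC.
Qed.

End Jets.

Section DifferentialPolynomials.
Variables (R : realType) (n : nat).
Local Notation jet := (jet R n).
Local Notation dfun := (dfun R n).
Implicit Types (f g : dfun) (p : jet).

Definition dpoly f := exists2 e, dterm_smooth e & dterm_eval e =1 f.

Lemma Dtot_dterm e i p : dterm_smooth e ->
  Dtot i (dterm_eval e) p = dterm_eval (dterm_D i e) p.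
Proof. by move=> se; rewrite /Dtot derive1E; apply/derive_val/is_derive_dterm. Qed.

Lemma dpoly_dterm f : dpoly f -> exists2 e, dterm_smooth e & f = dterm_eval e.
Proof. by case=> e se ef; exists e => //; apply/funext => p; rewrite ef. Qed.

Lemma dpoly_is_derive f i p : dpoly f ->
  is_derive (0 : R) 1 (fun t => f (cartan_line p i t)) (Dtot i f p).
Proof. by case/dpoly_dterm=> e se ->; rewrite Dtot_dterm //; apply: is_derive_dterm. Qed.

Lemma dpoly_Dtot f i : dpoly f -> dpoly (Dtot i f).
Proof.
case/dpoly_dterm=> e se ->; exists (dterm_D i e); first exact: dterm_smooth_D.
by move=> p; rewrite Dtot_dterm.
Qed.

Lemma dpoly_cst (r : R) : dpoly (fun=> r).
Proof. by exists (DConst n r). Qed.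

Lemma dpoly_jet a j J : dpoly (fun p => ju p a j J).
Proof. by exists (DJet R a j J). Qed.

Lemma dpoly_coef (g : 'rV[R]_4 -> R) : smooth g -> dpoly (fun p => g (jx p)).
Proof. by exists (DCoef n g). Qed.

Lemma dpolyD f g : dpoly f -> dpoly g -> dpoly (fun p => f p + g p).
Proof. by move=> [e1 s1 E1] [e2 s2 E2]; exists (DAdd e1 e2) => //= p; rewrite E1 E2. Qed.

Lemma dpolyM f g : dpoly f -> dpoly g -> dpoly (fun p => f p * g p).
Proof. by move=> [e1 s1 E1] [e2 s2 E2]; exists (DMul e1 e2) => //= p; rewrite E1 E2. Qed.

Lemma dpolyB f g : dpoly f -> dpoly g -> dpoly (fun p => f p - g p).
Proof.
move=> [e1 s1 E1] [e2 s2 E2]; exists (DAdd e1 (DMul (DConst n (-1)) e2)) => //= p.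
by rewrite E1 E2 mulN1r.
Qed.

Lemma dpoly_sum m (F : 'I_m -> dfun) :
  (forall k, dpoly (F k)) -> dpoly (fun p => \sum_(k < m) F k p).
Proof.
elim: m F => [|m IH] F dF.
  by case: (dpoly_cst 0) => e se E; exists e => // p; rewrite E big_ord0.
case: (dpolyD (IH (fun k => F (widen_ord (leqnSn m) k)) (fun k => dF _)) (dF ord_max)).
by move=> e se E; exists e => // p; rewrite E big_ord_recr.
Qed.

Lemma DtotD f g i p : dpoly f -> dpoly g ->
  Dtot i (fun q => f q + g q) p = Dtot i f p + Dtot i g p.
Proof.
move=> df dg; rewrite /Dtot derive1E; apply: derive_val.
exact: is_deriveD (dpoly_is_derive i p df) (dpoly_is_derive i p dg).
Qed.

Lemma DtotM f g i p : dpoly f -> dpoly g ->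
  Dtot i (fun q => f q * g q) p = Dtot i f p * g p + f p * Dtot i g p.
Proof.
move=> df dg; rewrite /Dtot derive1E; apply: derive_val.
have := is_deriveM (dpoly_is_derive i p df) (dpoly_is_derive i p dg).
rewrite /= !cartan_line0 => /(@is_derive_eq _ _ _ _ _ _ _ _).
by apply; rewrite addrC /GRing.scale /= mulrC.
Qed.

Lemma Dtot_cst (r : R) i p : Dtot i (fun=> r) p = 0.
Proof. exact: (Dtot_dterm (e := DConst n r)). Qed.

Lemma Dtot_jet a j J i p : Dtot i (fun q => ju q a j J) p = ju p a j (i :: J).
Proof. exact: (Dtot_dterm (e := DJet R a j J)). Qed.

Lemma Dtot_coef (g : 'rV[R]_4 -> R) i p : smooth g ->
  Dtot i (fun q => g (jx q)) p = partial i g (jx p).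
Proof. by move=> sg; apply: (Dtot_dterm (e := DCoef n g)). Qed.

Lemma DtotZ (r : R) f i p : dpoly f -> Dtot i (fun q => r * f q) p = r * Dtot i f p.
Proof. by move=> df; rewrite DtotM ?Dtot_cst ?mul0r ?add0r //; apply: dpoly_cst. Qed.

Lemma Dtot_coefM (g : 'rV[R]_4 -> R) f i p : smooth g -> dpoly f ->
  Dtot i (fun q => g (jx q) * f q) p = partial i g (jx p) * f p + g (jx p) * Dtot i f p.
Proof. by move=> sg df; rewrite DtotM ?Dtot_coef //; apply: dpoly_coef. Qed.

Lemma DtotB f g i p : dpoly f -> dpoly g ->
  Dtot i (fun q => f q - g q) p = Dtot i f p - Dtot i g p.
Proof.
move=> df dg; rewrite /Dtot derive1E; apply: derive_val.
exact: is_deriveB (dpoly_is_derive i p df) (dpoly_is_derive i p dg).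
Qed.

Lemma Dtot_sum m (F : 'I_m -> dfun) i p : (forall k, dpoly (F k)) ->
  Dtot i (fun q => \sum_(k < m) F k q) p = \sum_(k < m) Dtot i (F k) p.
Proof.
elim: m F => [|m IH] F dF.
  have -> : (fun q => \sum_(k < 0) F k q) = (fun=> 0).
    by apply: funext => q; rewrite big_ord0.
  by rewrite Dtot_cst big_ord0.
have -> : (fun q => \sum_(k < m.+1) F k q) =
    (fun q => \sum_(k < m) F (widen_ord (leqnSn m) k) q + F ord_max q).
  by apply: funext => q; rewrite big_ord_recr.
rewrite DtotD ?IH ?big_ord_recr //; exact: dpoly_sum.
Qed.

Lemma dterm_DC e i j p : dterm_smooth e -> sym_jet p ->
  dterm_eval (dterm_D i (dterm_D j e)) p = dterm_eval (dterm_D j (dterm_D i e)) p.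
Proof.
move=> + sp; elim: e => [r|a k J|g|e1 IH1 e2 IH2|e1 IH1 e2 IH2] se;
  cbn [dterm_eval dterm_D dterm_smooth] in se |- *.
- by [].
- by apply: sp; rewrite -[i :: j :: J]/([:: i] ++ [:: j] ++ J) perm_catCA.
- exact: partialC.
- by case: se => s1 s2; rewrite IH1 // IH2.
- by case: se => s1 s2; rewrite IH1 // IH2 //; ring.
Qed.

Lemma DtotC f i j p : dpoly f -> sym_jet p ->
  Dtot i (Dtot j f) p = Dtot j (Dtot i f) p.
Proof.
case/dpoly_dterm=> e se -> sp.
have Dj : Dtot j (dterm_eval e) = dterm_eval (dterm_D j e).
  by apply: funext => q; rewrite Dtot_dterm.
have Di : Dtot i (dterm_eval e) = dterm_eval (dterm_D i e).
  by apply: funext => q; rewrite Dtot_dterm.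
rewrite Dj Di (Dtot_dterm i p (dterm_smooth_D j se)) (Dtot_dterm j p (dterm_smooth_D i se)).
exact: dterm_DC.
Qed.

End DifferentialPolynomials.

Ltac dpoly_tac := repeat first
  [ assumption | apply: dpoly_jet | apply: dpoly_cst | apply: dpoly_Dtot
  | apply: dpoly_coef | apply: dpolyB | apply: dpolyD | apply: dpolyM
  | apply: dpoly_sum => ? ].

Section LieBracket.
Variables (R : realType) (n : nat) (c : 'I_n -> 'I_n -> 'I_n -> R).
Hypothesis lie_c : lie_structure c.
Implicit Types (u v w : 'I_n -> R).

Definition lbr u v : 'I_n -> R := fun a => \sum_(b < n) \sum_(g < n) c a b g * u b * v g.

Lemma lbrDl u v w a : lbr (fun b => u b + v b) w a = lbr u w a + lbr v w a.
Proof.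
rewrite /lbr -big_split; apply: eq_bigr => b _.
by rewrite -big_split; apply: eq_bigr => g _ /=; ring.
Qed.

Lemma lbrDr u v w a : lbr u (fun g => v g + w g) a = lbr u v a + lbr u w a.
Proof.
rewrite /lbr -big_split; apply: eq_bigr => b _.
by rewrite -big_split; apply: eq_bigr => g _ /=; ring.
Qed.

Lemma lbr_sumr m (v : 'I_m -> 'I_n -> R) u a :
  lbr u (fun g => \sum_(k < m) v k g) a = \sum_(k < m) lbr u (v k) a.
Proof.
rewrite /lbr [RHS]exchange_big; apply: eq_bigr => b _ /=.
by rewrite [RHS]exchange_big; apply: eq_bigr => g _ /=; rewrite mulr_sumr.
Qed.

Lemma lbrZl r u v a : lbr (fun b => r * u b) v a = r * lbr u v a.
Proof.
rewrite /lbr mulr_sumr; apply: eq_bigr => b _.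
by rewrite mulr_sumr; apply: eq_bigr => g _ /=; ring.
Qed.

Lemma lbrZr r u v a : lbr u (fun g => r * v g) a = r * lbr u v a.
Proof.
rewrite /lbr mulr_sumr; apply: eq_bigr => b _.
by rewrite mulr_sumr; apply: eq_bigr => g _ /=; ring.
Qed.

Lemma lbrBl u v w a : lbr (fun b => u b - v b) w a = lbr u w a - lbr v w a.
Proof.
rewrite /lbr -sumrB; apply: eq_bigr => b _.
by rewrite -sumrB; apply: eq_bigr => g _ /=; ring.
Qed.

Lemma lbrBr u v w a : lbr u (fun g => v g - w g) a = lbr u v a - lbr u w a.
Proof.
rewrite /lbr -sumrB; apply: eq_bigr => b _.
by rewrite -sumrB; apply: eq_bigr => g _ /=; ring.
Qed.

Lemma lbr_antisym u v a : lbr u v a = - lbr v u a.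
Proof.
rewrite /lbr exchange_big -sumrN; apply: eq_bigr => g _.
rewrite -sumrN; apply: eq_bigr => b _.
by rewrite lie_c.1; ring.
Qed.

Lemma lbr_lbrE u v w a : lbr u (lbr v w) a =
  \sum_(b < n) \sum_(d < n) \sum_(e < n) u b * v d * w e * \sum_(g < n) c a b g * c g d e.
Proof.
rewrite /lbr; apply: eq_bigr => b _.
under eq_bigr do rewrite mulr_sumr; rewrite exchange_big; apply: eq_bigr => d _.
under eq_bigr do rewrite mulr_sumr; rewrite exchange_big; apply: eq_bigr => e _.
by rewrite mulr_sumr; apply: eq_bigr => g _ /=; ring.
Qed.

Lemma lbr_jacobi u v w a :
  lbr u (lbr v w) a + lbr v (lbr w u) a + lbr w (lbr u v) a = 0.
Proof.
have rot (F : 'I_n -> 'I_n -> 'I_n -> R) : \sum_(b < n) \sum_(d < n) \sum_(e < n) F b d e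
    = \sum_(e < n) \sum_(b < n) \sum_(d < n) F b d e.
  by under eq_bigr do rewrite exchange_big; rewrite exchange_big.
rewrite !lbr_lbrE [X in _ + X + _]rot [X in _ + X]rot [X in _ + X]rot -!big_split /=.
rewrite big1 // => b _; rewrite -!big_split big1 // => d _.
rewrite -!big_split big1 // => e _.
transitivity (u b * v d * w e * \sum_(g < n)
    (c a b g * c g d e + c a d g * c g e b + c a e g * c g b d)).
  by rewrite !big_split /=; ring.
by rewrite lie_c.2 mulr0.
Qed.

Lemma lbr_lbr u v w a : lbr u (lbr v w) a - lbr v (lbr u w) a = lbr (lbr u v) w a.
Proof.
have := lbr_jacobi u v w a.
rewrite (lbr_antisym w) (_ : lbr w u = fun g => - lbr u w g); last first.
  by apply: funext => g; rewrite lbr_antisym.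
rewrite (_ : (fun g => - lbr u w g) = (fun g => -1 * lbr u w g)); last first.
  by apply: funext => g; rewrite mulN1r.
rewrite lbrZr mulN1r => E; apply/eqP; rewrite -subr_eq0; apply/eqP.
by rewrite -E; ring.
Qed.

End LieBracket.

Section CovariantCalculus.
Variables (R : realType) (n : nat) (c : 'I_n -> 'I_n -> 'I_n -> R).
Hypothesis lie_c : lie_structure c.
Local Notation jet := (jet R n).
Local Notation gfun := (gfun R n).
Local Notation lbr := (lbr c).
Local Notation nabla := (nabla c).
Local Notation Fld := (Fld c).
Implicit Types (G H : gfun) (p q : jet).

Definition pot p (i : 'I_4) : 'I_n -> R := fun b => ju p b i [::].
Definition dpot p (i m : 'I_4) : 'I_n -> R := fun b => ju p b i [:: m].

Lemma nablaE i G a p : nabla i G a p = Dtot i (G a) p + lbr (pot p i) (G^~ p) a.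
Proof. by []. Qed.

Lemma FldE i j a p : Fld i j a p = dpot p j i a - dpot p i j a + lbr (pot p i) (pot p j) a.
Proof. by []. Qed.

Definition gdpoly G := forall a, dpoly (G a).

Lemma gdpoly_Fld i j : gdpoly (Fld i j).
Proof. by move=> a; rewrite /Fld; dpoly_tac. Qed.

Lemma gdpoly_nabla i G : gdpoly G -> gdpoly (nabla i G).
Proof. by move=> dG a; rewrite /nabla; dpoly_tac. Qed.

Lemma Dtot_lbr U V i a p : gdpoly U -> gdpoly V ->
  Dtot i (fun q => lbr (U^~ q) (V^~ q) a) p =
  lbr (fun b => Dtot i (U b) p) (V^~ p) a + lbr (U^~ p) (fun g => Dtot i (V g) p) a.
Proof.
move=> dU dV; rewrite /lbr Dtot_sum => [|b]; last by dpoly_tac.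
rewrite -big_split; apply: eq_bigr => b _ /=.
rewrite Dtot_sum => [|g]; last by dpoly_tac.
rewrite -big_split; apply: eq_bigr => g _ /=.
by rewrite DtotM ?DtotZ ?mulrDr ?mulrA; dpoly_tac.
Qed.

Lemma Dtot_pot i m p : (fun b => Dtot m (fun q => ju q b i [::]) p) = dpot p i m.
Proof. by apply: funext => b; rewrite Dtot_jet. Qed.

Lemma nabla_sum m (G : 'I_m -> gfun) i a p : (forall k, gdpoly (G k)) ->
  nabla i (fun b q => \sum_(k < m) G k b q) a p = \sum_(k < m) nabla i (G k) a p.
Proof.
move=> dG; rewrite nablaE Dtot_sum => [|k]; last exact: dG.
cbv beta; rewrite lbr_sumr -big_split.
by apply: eq_bigr => k _; rewrite nablaE.
Qed.

Lemma nablaD G H i a p : gdpoly G -> gdpoly H ->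
  nabla i (fun b q => G b q + H b q) a p = nabla i G a p + nabla i H a p.
Proof. by move=> dG dH; rewrite !nablaE DtotD // lbrDr; ring. Qed.

Lemma nablaZ (r : R) G i a p : gdpoly G ->
  nabla i (fun b q => r * G b q) a p = r * nabla i G a p.
Proof. by move=> dG; rewrite !nablaE DtotZ // lbrZr mulrDr. Qed.

Lemma nabla_sym i G H a p : (forall q, sym_jet q -> forall b, G b q = H b q) ->
  sym_jet p -> nabla i G a p = nabla i H a p.
Proof.
move=> GH sp; rewrite !nablaE (Dtot_sym (g := H a)) => [|q sq|//]; last exact: GH.
by congr (_ + _); congr (lbr _ _ a); apply: funext => b; apply: GH.
Qed.

Lemma Dtot_Fld m j k a p : Dtot m (Fld j k a) p =
  ju p a k [:: m; j] - ju p a j [:: m; k]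
  + lbr (dpot p j m) (pot p k) a + lbr (pot p j) (dpot p k m) a.
Proof.
rewrite /Fld DtotD; [|by dpoly_tac|by dpoly_tac].
rewrite DtotB ?Dtot_jet; [|by dpoly_tac|by dpoly_tac].
rewrite (Dtot_lbr (U := fun b q => ju q b j [::]) (V := fun g q => ju q g k [::]));
  [|by move=> b; dpoly_tac|by move=> b; dpoly_tac].
by rewrite !Dtot_pot addrA.
Qed.

Lemma nabla_FldE m j k a p : nabla m (Fld j k) a p =
  ju p a k [:: m; j] - ju p a j [:: m; k]
  + lbr (dpot p j m) (pot p k) a + lbr (pot p j) (dpot p k m) a
  + lbr (pot p m) (dpot p k j) a - lbr (pot p m) (dpot p j k) a
  + lbr (pot p m) (lbr (pot p j) (pot p k)) a.
Proof.
rewrite nablaE Dtot_Fld.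
have -> : (Fld j k)^~ p = fun g => dpot p k j g - dpot p j k g + lbr (pot p j) (pot p k) g.
  by [].
by rewrite lbrDr lbrBr; ring.
Qed.

Lemma Fld_antisym j k a p : Fld k j a p = - Fld j k a p.
Proof. by rewrite !FldE (lbr_antisym lie_c (pot p k)); ring. Qed.

Lemma nabla_Fld_antisym l j k a p : nabla l (Fld k j) a p = - nabla l (Fld j k) a p.
Proof.
have -> : Fld k j = fun b q => -1 * Fld j k b q.
  by do 2!apply: funext => ?; rewrite Fld_antisym mulN1r.
by rewrite nablaZ ?mulN1r //; apply: gdpoly_Fld.
Qed.

Lemma bianchi m j k a p : sym_jet p ->
  nabla m (Fld j k) a p + nabla j (Fld k m) a p + nabla k (Fld m j) a p = 0.
Proof.
move=> sp; have sym2 b i (l l' : 'I_4) : ju p b i [:: l; l'] = ju p b i [:: l'; l].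
  by apply: sp; rewrite -[[:: l; l']]/([:: l] ++ [:: l'] ++ [::]) perm_catCA.
rewrite !nabla_FldE (sym2 a k m) (sym2 a m j) (sym2 a j k).
rewrite (lbr_antisym lie_c (dpot p j m)) (lbr_antisym lie_c (dpot p k j)).
rewrite (lbr_antisym lie_c (dpot p m k)).
rewrite -(lbr_jacobi lie_c (pot p m) (pot p j) (pot p k) a); ring.
Qed.

Lemma nabla_nablaE l m G a p : gdpoly G ->
  nabla l (nabla m G) a p = Dtot l (Dtot m (G a)) p
  + lbr (dpot p m l) (G^~ p) a + lbr (pot p m) (fun g => Dtot l (G g) p) a
  + lbr (pot p l) (fun g => Dtot m (G g) p) a
  + lbr (pot p l) (lbr (pot p m) (G^~ p)) a.
Proof.
move=> dG; rewrite nablaE.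
rewrite (_ : nabla m G a = fun q => Dtot m (G a) q + lbr (pot q m) (G^~ q) a) //.
rewrite DtotD; [|by dpoly_tac|by rewrite /lbr; dpoly_tac].
rewrite (Dtot_lbr (U := fun b q => ju q b m [::])) //; last by move=> b; dpoly_tac.
rewrite Dtot_pot.
have -> : (nabla m G)^~ p = fun g => Dtot m (G g) p + lbr (pot p m) (G^~ p) g by [].
by rewrite lbrDr; ring.
Qed.

Lemma ricci l m G a p : gdpoly G -> sym_jet p ->
  nabla l (nabla m G) a p - nabla m (nabla l G) a p = lbr ((Fld l m)^~ p) (G^~ p) a.
Proof.
move=> dG sp; rewrite !nabla_nablaE // (DtotC _ _ (dG a) sp).
have -> : (Fld l m)^~ p = fun b => dpot p m l b - dpot p l m b + lbr (pot p l) (pot p m) b.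
  by [].
by rewrite lbrDl lbrBl -(lbr_lbr lie_c); ring.
Qed.

End CovariantCalculus.

Section EndomorphismFields.
Variables (R : realType) (n : nat) (c : 'I_n -> 'I_n -> 'I_n -> R).
Hypothesis lie_c : lie_structure c.
Local Notation jet := (jet R n).
Local Notation gfun := (gfun R n).
Local Notation lbr := (lbr c).
Local Notation nabla := (nabla c).
Local Notation endo := ('I_n -> 'I_n -> 'rV[R]_4 -> R).
Implicit Types (X : endo) (G : gfun) (p : jet).

Definition act X G : gfun := fun a p => \sum_(b < n) X a b (jx p) * G b p.

(* [X [e_g, e_d] = [e_g, X e_d]] *)
Definition ad_equivariant X :=
  forall a g d x, \sum_(b < n) (X a b x * c b g d + c a b g * X b d x) = 0.

Definition smooth_endo X := forall a b, smooth (X a b).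

Definition partial_endo (l : 'I_4) X : endo := fun a b => partial l (X a b).

Lemma lbr_endo X x u v a : ad_equivariant X ->
  lbr u (fun g => \sum_(d < n) X g d x * v d) a = \sum_(b < n) X a b x * lbr u v b.
Proof.
move=> eqX.
transitivity (\sum_(b < n) \sum_(d < n) u b * v d * \sum_(g < n) c a b g * X g d x).
  rewrite /lbr; apply: eq_bigr => b _.
  under eq_bigr do rewrite mulr_sumr; rewrite exchange_big; apply: eq_bigr => d _.
  by rewrite mulr_sumr; apply: eq_bigr => g _; ring.
transitivity (\sum_(d < n) \sum_(e < n) u d * v e * \sum_(b < n) X a b x * c b d e).
  apply: eq_bigr => b _; apply: eq_bigr => d _; congr (_ * _).
  have := eqX a b d x; rewrite big_split /= => /eqP; rewrite addr_eq0 => /eqP ->.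
  by rewrite -sumrN; apply: eq_bigr => g _; rewrite lie_c.1 mulNr.
rewrite /lbr; under [RHS]eq_bigr do rewrite mulr_sumr; rewrite [RHS]exchange_big.
apply: eq_bigr => d _; under [RHS]eq_bigr do rewrite mulr_sumr; rewrite [RHS]exchange_big.
by apply: eq_bigr => e _; rewrite mulr_sumr; apply: eq_bigr => b _ /=; ring.
Qed.

Lemma smooth_partial_endo l X : smooth_endo X -> smooth_endo (partial_endo l X).
Proof. by move=> sX a b; apply: smooth_partial. Qed.

Lemma ad_equivariant_partial l X : smooth_endo X -> ad_equivariant X ->
  ad_equivariant (partial_endo l X).
Proof.
move=> sX eqX a g d x; rewrite /partial_endo.
have dX a' b' : differentiable (X a' b') x by apply: smooth_differentiable.
have lin b : (fun y => X a b y * c b g d + c a b g * X b d y)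
    = (fun y => c b g d * X a b y + c a b g * X b d y).
  by apply: funext => y; rewrite mulrC.
transitivity (partial l (fun y => \sum_(b < n) (X a b y * c b g d + c a b g * X b d y)) x).
  rewrite partial_sum => [|b]; last by rewrite lin; apply/derivable_lin; exact: diff_derivable.
  by apply: eq_bigr => b _; rewrite lin partial_lin //; ring.
by rewrite (_ : (fun y => _) = fun=> 0) ?partial_cst //; apply: funext => y; exact: eqX.
Qed.

Lemma gdpoly_act X G : smooth_endo X -> gdpoly G -> gdpoly (act X G).
Proof. by move=> sX dG a; rewrite /act; dpoly_tac; first [exact: sX | exact: dG]. Qed.

Lemma nabla_act X G l a p : smooth_endo X -> ad_equivariant X -> gdpoly G ->
  nabla l (act X G) a p = act (partial_endo l X) G a p + act X (nabla l G) a p.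
Proof.
move=> sX eqX dG.
rewrite nablaE /act Dtot_sum => [|b]; last by dpoly_tac; first [exact: sX | exact: dG].
rewrite (eq_bigr _ (fun b _ => Dtot_coefM l p (sX a b) (dG b))) big_split /=.
cbv beta; rewrite lbr_endo // -addrA; congr (_ + _).
by rewrite -big_split; apply: eq_bigr => b _; rewrite nablaE mulrDr.
Qed.

Lemma nabla2_act X G l m a p : smooth_endo X -> ad_equivariant X -> gdpoly G ->
  nabla l (nabla m (act X G)) a p = act (partial_endo l (partial_endo m X)) G a p
  + act (partial_endo m X) (nabla l G) a p + act (partial_endo l X) (nabla m G) a p
  + act X (nabla l (nabla m G)) a p.
Proof.
move=> sX eqX dG.
have sXm := smooth_partial_endo m sX; have eqXm := ad_equivariant_partial m sX eqX.
have -> : nabla m (act X G) = fun b q => act (partial_endo m X) G b q + act X (nabla m G) b q.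
  by do 2!apply: funext => ?; apply: nabla_act.
rewrite nablaD; last 2 first.
- exact: gdpoly_act.
- exact/gdpoly_act/gdpoly_nabla.
by rewrite !nabla_act //; [ring | apply: gdpoly_nabla].
Qed.

End EndomorphismFields.

Section Minkowski.
Variable R : realType.
Local Notation eta := (mink R).

Lemma mink_sq j : eta j j * eta j j = 1.
Proof. by rewrite /mink eqxx; case: ifP => _; rewrite ?mulN1r ?opprK ?mulr1. Qed.

Lemma mink_offdiag j k : j != k -> eta j k = 0.
Proof. by rewrite /mink => /negbTE ->. Qed.

Lemma mink_neq0 j : eta j j != 0.
Proof. by rewrite /mink eqxx; case: ifP => _; rewrite ?oppr_eq0 oner_neq0. Qed.

Lemma mink_sym j k : eta j k = eta k j.
Proof. by rewrite /mink eq_sym; case: eqP => // ->. Qed.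

Lemma sum_mink (f : 'I_4 -> R) j : \sum_(k < 4) eta j k * f k = eta j j * f j.
Proof.
rewrite (bigD1 j) //= big1 ?addr0 // => k nkj.
by rewrite mink_offdiag ?mul0r // eq_sym.
Qed.

(* [Y m k] stands for [d_m xi_k], [xi] a conformal Killing field with factor
   [kappa], and [N m j k] for [nabla_m F_jk]. *)
Lemma conformal_bianchi_contraction (Y : 'I_4 -> 'I_4 -> R) (kappa : R)
    (N : 'I_4 -> 'I_4 -> 'I_4 -> R) i :
  (forall m k, (eta m m * Y m k + eta k k * Y k m) / 2 = eta m k * kappa) ->
  (forall m j k, N m k j = - N m j k) ->
  (forall m j k, N m j k + N j k m + N k m j = 0) ->
  (forall k, \sum_(j < 4) eta j j * N j k j = 0) ->
  \sum_(j < 4) \sum_(k < 4) eta j j * (Y i k * N j j k + Y j k * N i j k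
      - 2 * (Y j k * N j i k)) = 0.
Proof.
move=> killing N_anti N_cyc N_div.
pose Yh j k := eta j j * Y j k.
have Yh_swap j k : Yh k j = 2 * eta j k * kappa - Yh j k.
  have := killing k j; rewrite /Yh mink_sym => E.
  by rewrite -mulrA -E; field; rewrite ?pnatr_eq0.
have N_jik j k : N j i k = N i j k + N k i j.
  have := N_cyc j i k; rewrite (N_anti i j k) (N_anti k i j) => E.
  by apply/eqP; rewrite -subr_eq0 -E; apply/eqP; ring.
have div_term : \sum_(j < 4) \sum_(k < 4) eta j j * (Y i k * N j j k) = 0.
  rewrite exchange_big /= big1 // => k _.
  transitivity (- Y i k * \sum_(j < 4) eta j j * N j k j); last by rewrite N_div mulr0.
  by rewrite big_distrr /=; apply: eq_bigr => j _; rewrite (N_anti j k j); ring.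
pose T := \sum_(j < 4) \sum_(k < 4) Yh j k * N i j k.
pose S := \sum_(j < 4) \sum_(k < 4) Yh j k * N k i j.
have rest : \sum_(j < 4) \sum_(k < 4) (Yh j k * N i j k - 2 * (Yh j k * N j i k))
    = - T - 2 * S.
  rewrite /T /S mulr_sumr -sumrN -sumrB; apply: eq_bigr => j _.
  by rewrite mulr_sumr -sumrN -sumrB; apply: eq_bigr => k _; rewrite N_jik; ring.
have trace : \sum_(j < 4) \sum_(k < 4) eta j k * (2 * kappa * N j i k) = 0.
  under eq_bigr do rewrite sum_mink.
  transitivity (2 * kappa * \sum_(j < 4) eta j j * N j i j); last by rewrite N_div mulr0.
  by rewrite big_distrr; apply: eq_bigr => j _ /=; ring.
have swap j k : Yh k j * N j i k
    = eta j k * (2 * kappa * N j i k) - (Yh j k * N i j k + Yh j k * N k i j).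
  by rewrite Yh_swap mulrBl [in Yh j k * N j i k]N_jik; ring.
(* swapping [j] and [k] in [S] and using the Killing equation gives [S = - T - S] *)
have S_eq : S = - T - S.
  transitivity (\sum_(j < 4) \sum_(k < 4) eta j k * (2 * kappa * N j i k) - (T + S));
    last by rewrite trace sub0r opprD.
  rewrite {1}/S exchange_big /= /T /S -big_split -sumrB /=; apply: eq_bigr => j _.
  by rewrite -big_split -sumrB; apply: eq_bigr => k _ /=; rewrite swap.
transitivity (\sum_(j < 4) \sum_(k < 4) eta j j * (Y i k * N j j k)
    + \sum_(j < 4) \sum_(k < 4) (Yh j k * N i j k - 2 * (Yh j k * N j i k))).
  rewrite -big_split /=; apply: eq_bigr => j _; rewrite -big_split /=.
  by apply: eq_bigr => k _; rewrite /Yh; ring.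
by rewrite div_term rest add0r mulr_natl mulr2n {2}S_eq; ring.
Qed.

(* [w m a b] stands for [d_m d_a xi_b] and [K m] for [d_m k]. *)
Lemma conformal_killing_hessian (w : 'I_4 -> 'I_4 -> 'I_4 -> R) (K : 'I_4 -> R) :
  (forall m a b, w m a b = w a m b) ->
  (forall m a, w m a a = K m) ->
  (forall m a b, a != b -> eta a a * w m a b + eta b b * w m b a = 0) ->
  forall m a b, w m a b = eta b b * (eta a b * K m + eta m b * K a - eta m a * K b).
Proof.
move=> w_sym w_diag w_off.
pose L m a b := eta b b * w m a b.
have L_sym m a b : L m a b + L m b a = 2 * eta a b * K m.
  rewrite /L; case: (eqVneq a b) => [->|nab]; first by rewrite w_diag; ring.
  rewrite (mink_offdiag nab) mulr0 mul0r.
  have -> : eta b b * w m a b + eta a a * w m b a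
     = eta a a * eta b b * (eta a a * w m a b + eta b b * w m b a)
       + (1 - eta a a * eta a a) * (eta b b * w m a b)
       + (1 - eta b b * eta b b) * (eta a a * w m b a) by ring.
  by rewrite w_off // !mink_sq !subrr; ring.
move=> m a b.
have L2 : 2 * L m a b = (L m a b + L m b a) + (L a m b + L a b m) - (L b m a + L b a m).
  by rewrite /L (w_sym a m b) (w_sym a b m) (w_sym m b a); ring.
rewrite !L_sym in L2.
have EL : L m a b = eta a b * K m + eta m b * K a - eta m a * K b.
  have two_neq0 : (2 : R) != 0 by rewrite pnatr_eq0.
  by apply: (mulfI two_neq0); rewrite L2; ring.
by rewrite -EL /L mulrA mink_sq mul1r.
Qed.

Local Notation o0 := (@Ordinal 4 0 isT).
Local Notation o1 := (@Ordinal 4 1 isT).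
Local Notation o2 := (@Ordinal 4 2 isT).
Local Notation o3 := (@Ordinal 4 3 isT).

Lemma sum_I4 (f : 'I_4 -> R) : \sum_(k < 4) f k = f o0 + f o1 + f o2 + f o3.
Proof.
rewrite !big_ord_recl big_ord0 addr0 !addrA.
by congr (_ + _ + _ + _); congr f; apply: val_inj.
Qed.

Lemma conformal_hessian_contraction (w : 'I_4 -> 'I_4 -> 'I_4 -> R) (K : 'I_4 -> R)
    (F : 'I_4 -> 'I_4 -> R) i :
  (forall m a b, w m a b = w a m b) ->
  (forall m a, w m a a = K m) ->
  (forall m a b, a != b -> eta a a * w m a b + eta b b * w m b a = 0) ->
  (forall j k, F k j = - F j k) ->
  \sum_(j < 4) \sum_(k < 4) eta j j * (w j i k * F j k - w j j k * F i k) = 0.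
Proof.
move=> w_sym w_diag w_off F_anti.
have F_diag j : F j j = 0 by apply/eqP; rewrite -eqNr -F_anti.
under eq_bigr do under eq_bigr do rewrite !(conformal_killing_hessian w_sym w_diag w_off).
have [-> | [-> | [-> | ->]]] : i = o0 \/ i = o1 \/ i = o2 \/ i = o3.
- by case: i => [[|[|[|[|//]]]] ?]; [left|right; left|right; right; left|right; right; right];
    apply: val_inj.
all: rewrite !sum_I4 /mink /= (F_anti o0 o1) (F_anti o0 o2) (F_anti o0 o3).
all: by rewrite (F_anti o1 o2) (F_anti o1 o3) (F_anti o2 o3) !F_diag; ring.
Qed.

End Minkowski.

Section LinearizedYangMills.
Variables (R : realType) (n : nat) (c : 'I_n -> 'I_n -> 'I_n -> R).
Hypothesis lie_c : lie_structure c.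
Local Notation gfun := (gfun R n).
Local Notation lbr := (lbr c).
Local Notation nabla := (nabla c).
Local Notation Fld := (Fld c).
Local Notation eta := (mink R).

Lemma linYME (Q : 'I_4 -> gfun) i a p : linYM c Q i a p =
  \sum_(j < 4) eta j j * nabla j (nabla i (Q j)) a p
  - \sum_(j < 4) eta j j * nabla j (nabla j (Q i)) a p
  - \sum_(j < 4) lbr (fun b => eta j j * Fld i j b p) ((Q j)^~ p) a.
Proof. by []. Qed.

Lemma linYM_act X (G : 'I_4 -> gfun) i a p :
  smooth_endo X -> ad_equivariant c X -> (forall j, gdpoly (G j)) ->
  linYM c (fun j => act X (G j)) i a p = act X (linYM c G i) a p
  + \sum_(b < n) \sum_(j < 4) eta j j *
      (partial j (partial i (X a b)) (jx p) * G j b p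
       - partial j (partial j (X a b)) (jx p) * G i b p
       + partial i (X a b) (jx p) * nabla j (G j) b p
       + partial j (X a b) (jx p) * nabla i (G j) b p
       - 2 * (partial j (X a b) (jx p) * nabla j (G i) b p)).
Proof.
move=> sX eqX dG.
(* [ring] on the goal itself would compare the atoms [partial _ _ _] up to
   conversion, unfolding the derivatives; hence this abstract identity. *)
have regroup (e x dji djj di dj gj gi nj ni nji ndj ndd l : R) :
    e * (dji * gj + di * nj + dj * ni + x * nji) - e * (djj * gi + dj * ndj + dj * ndj + x * ndd)
    - x * l
  = x * (e * nji - e * ndd - l)
    + e * (dji * gj - djj * gi + di * nj + dj * ni - 2 * (dj * ndj)).
  by ring.
rewrite linYME -!sumrB.
under eq_bigr => j _ do rewrite (nabla2_act lie_c j i a p sX eqX (dG j))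
  (nabla2_act lie_c j j a p sX eqX (dG i)) (lbr_endo lie_c _ _ _ _ eqX).
rewrite /act; under [in RHS]eq_bigr => b _ do rewrite linYME -!sumrB mulr_sumr.
rewrite -big_split; under [RHS]eq_bigr do rewrite -big_split.
rewrite [RHS]exchange_big; apply: eq_bigr => j _.
rewrite -!big_split !mulr_sumr -!sumrB; apply: eq_bigr => b _.
exact: regroup.
Qed.

Lemma linYM_sum m (Q : 'I_m -> 'I_4 -> gfun) i a p : (forall k j, gdpoly (Q k j)) ->
  linYM c (fun j b q => \sum_(k < m) Q k j b q) i a p = \sum_(k < m) linYM c (Q k) i a p.
Proof.
move=> dQ.
have nabla2_sum l l' j : nabla l (nabla l' (fun b q => \sum_(k < m) Q k j b q)) a p
    = \sum_(k < m) nabla l (nabla l' (Q k j)) a p.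
  rewrite (_ : nabla l' _ = fun b q => \sum_(k < m) nabla l' (Q k j) b q).
    by rewrite nabla_sum // => k; apply: gdpoly_nabla.
  by do 2!apply: funext => ?; rewrite nabla_sum.
rewrite linYME; cbv beta.
under eq_bigr do rewrite nabla2_sum mulr_sumr.
under [X in _ - X - _]eq_bigr do rewrite nabla2_sum mulr_sumr.
under [X in _ - X]eq_bigr do rewrite lbr_sumr.
under [RHS]eq_bigr do rewrite linYME.
by rewrite !sumrB; congr (_ - _ - _); rewrite exchange_big.
Qed.

Lemma nabla_YM k i a p :
  nabla k (YM c i) a p = \sum_(j < 4) eta j j * nabla k (nabla j (Fld i j)) a p.
Proof.
rewrite /YM (@nabla_sum R n c 4 (fun j b q => eta j j * nabla j (Fld i j) b q)).
  by apply: eq_bigr => j _; rewrite nablaZ //; apply/gdpoly_nabla/gdpoly_Fld.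
by move=> j b; dpoly_tac; apply/gdpoly_nabla/gdpoly_Fld.
Qed.

(* [F_{.k}] is the symmetry generated by the translations along [x^k]. *)
Lemma linYM_Fld k i a p : sym_jet p -> on_Rp c 1 p -> linYM c (fun j => Fld j k) i a p = 0.
Proof.
move=> sp Rp.
have bianchi_jj j : nabla j (nabla j (Fld i k)) a p
    = nabla j (nabla i (Fld j k)) a p + nabla j (nabla k (Fld i j)) a p.
  rewrite -nablaD; try exact/gdpoly_nabla/gdpoly_Fld.
  apply: nabla_sym => // q sq b.
  have /eqP := bianchi lie_c j i k b sq.
  rewrite (nabla_Fld_antisym lie_c i j k) (nabla_Fld_antisym lie_c k i j).
  by rewrite -addrA addr_eq0 opprD !opprK => /eqP.
have ricci_j j : nabla j (nabla k (Fld i j)) a p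
    = nabla k (nabla j (Fld i j)) a p + lbr ((Fld j k)^~ p) ((Fld i j)^~ p) a.
  have : nabla j (nabla k (Fld i j)) a p - nabla k (nabla j (Fld i j)) a p
      = lbr ((Fld j k)^~ p) ((Fld i j)^~ p) a.
    by apply: ricci => //; apply: gdpoly_Fld.
  by move/eqP; rewrite subr_eq addrC => /eqP.
have YMk : nabla k (YM c i) a p = 0 := Rp [:: k] isT i a.
have regroup (e A B L : R) : e * A - e * (A + (B + L)) - e * - L = - (e * B) by ring.
rewrite linYME; transitivity (- nabla k (YM c i) a p); last by rewrite YMk oppr0.
rewrite nabla_YM -!sumrB -sumrN; apply: eq_bigr => j _.
by rewrite bianchi_jj ricci_j lbrZl (lbr_antisym lie_c ((Fld i j)^~ p)) regroup.
Qed.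

End LinearizedYangMills.

Section ConformalSymmetry.
Variables (R : realType) (n : nat) (c : 'I_n -> 'I_n -> 'I_n -> R).
Variables (xi : 'I_n -> 'I_n -> 'I_4 -> 'rV[R]_4 -> R) (kappa : 'I_n -> 'I_n -> 'rV[R]_4 -> R).
Hypothesis lie_c : lie_structure c.
Hypothesis xi_smooth : forall a b j, smooth (xi a b j).
Hypothesis xi_conformal : forall (i j : 'I_4) a b x,
  (mink R i i * partial i (xi a b j) x + mink R j j * partial j (xi a b i) x) / 2
  = mink R i j * kappa a b x.
Hypothesis xi_equivariant : forall a g d j x,
  \sum_(b < n) (xi a b j x * c b g d + c a b g * xi b d j x) = 0.
Local Notation eta := (mink R).
Local Notation nabla := (nabla c).
Local Notation Fld := (Fld c).

Definition xi_Fld : 'I_4 -> gfun R n :=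
  fun i a p => \sum_(b < n) \sum_(j < 4) xi a b j (jx p) * Fld i j b p.

Lemma xi_Fld_order1 i a : order_le 1 (xi_Fld i a).
Proof.
move=> p1 p2 Ex Eu; rewrite /xi_Fld Ex.
apply: eq_bigr => b _; apply: eq_bigr => j _; congr (_ * _).
rewrite /Fld !Eu //; congr (_ + _).
by apply: eq_bigr => d _; apply: eq_bigr => e _; rewrite !Eu.
Qed.

Lemma partial_xi_diag a b i x : partial i (xi a b i) x = kappa a b x.
Proof.
have := xi_conformal i i a b x.
rewrite -mulr2n -[X in X / _]mulr_natr mulfK ?pnatr_eq0 //.
exact/mulfI/mink_neq0.
Qed.

Lemma partial_xi_offdiag a b i j x : i != j ->
  eta i i * partial i (xi a b j) x + eta j j * partial j (xi a b i) x = 0.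
Proof.
move=> nij; have := xi_conformal i j a b x.
by rewrite (mink_offdiag R nij) mul0r => /eqP; rewrite mulf_eq0 invr_eq0 pnatr_eq0 orbF => /eqP.
Qed.

Lemma xi_second_order_terms a b i x (F : 'I_4 -> 'I_4 -> R) :
  (forall j k, F k j = - F j k) ->
  \sum_(j < 4) \sum_(k < 4) eta j j *
    (partial j (partial i (xi a b k)) x * F j k - partial j (partial j (xi a b k)) x * F i k)
  = 0.
Proof.
apply: (conformal_hessian_contraction (w := fun m a' b' => partial m (partial a' (xi a b b')) x)
  (K := fun m => partial m (kappa a b) x)) => [m a' b'|m a'|m a' b' nab].
- exact: partialC.
- by congr (partial m _ x); apply: funext => y; apply: partial_xi_diag.
- have dxi j k : differentiable (partial j (xi a b k)) x.
    exact/smooth_differentiable/smooth_partial.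
  rewrite -partial_lin // -(partial_cst 0 m x); congr (partial m _ x).
  by apply: funext => y; apply: partial_xi_offdiag.
Qed.

Lemma xi_first_order_terms a b i p : sym_jet p -> on_Rp c 1 p ->
  \sum_(j < 4) \sum_(k < 4) eta j j *
    (partial i (xi a b k) (jx p) * nabla j (Fld j k) b p
     + partial j (xi a b k) (jx p) * nabla i (Fld j k) b p
     - 2 * (partial j (xi a b k) (jx p) * nabla j (Fld i k) b p)) = 0.
Proof.
move=> sp Rp.
apply: (conformal_bianchi_contraction (Y := fun m k => partial m (xi a b k) (jx p))
  (kappa := kappa a b (jx p)) (N := fun m j k => nabla m (Fld j k) b p)).
- by move=> m k; apply: xi_conformal.
- by move=> m j k; apply: (nabla_Fld_antisym lie_c).
- by move=> m j k; apply: (bianchi lie_c).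
- by move=> k; apply: (Rp [::]).
Qed.

Lemma linYM_xi_Fld i a p : sym_jet p -> on_Rp c 1 p -> linYM c xi_Fld i a p = 0.
Proof.
move=> sp Rp.
pose X k : 'I_n -> 'I_n -> 'rV[R]_4 -> R := fun a' b' => xi a' b' k.
have sX k : smooth_endo (X k) by move=> ? ?; apply: xi_smooth.
have eqX k : ad_equivariant c (X k) by move=> ? ? ? ?; apply: xi_equivariant.
have act0 k : act (X k) (linYM c (fun j => Fld j k) i) a p = 0.
  by rewrite /act big1 // => b _; rewrite linYM_Fld ?mulr0.
have split_terms (e A B C D E : R) :
  e * (A - B + C + D - 2 * E) = e * (A - B) + e * (C + D - 2 * E) by ring.
have -> : xi_Fld = fun j b q => \sum_(k < 4) act (X k) (Fld j k) b q.
  by do 3!apply: funext => ?; rewrite /xi_Fld exchange_big.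
rewrite linYM_sum => [|k j]; last exact/gdpoly_act/gdpoly_Fld.
under eq_bigr => k _ do rewrite (@linYM_act _ _ _ lie_c (X k) (fun j => Fld j k) i a p
  (sX k) (eqX k) (fun j => gdpoly_Fld c j k)) act0 add0r.
rewrite exchange_big big1 // => b _; rewrite exchange_big.
under eq_bigr do under eq_bigr do rewrite split_terms.
under eq_bigr do rewrite big_split.
rewrite big_split xi_second_order_terms ?xi_first_order_terms //; first exact: addr0.
by move=> j k; apply: Fld_antisym.
Qed.

End ConformalSymmetry.

Theorem proposition2p3 (R : realType) (n : nat)
  (c : 'I_n -> 'I_n -> 'I_n -> R)
  (xi : 'I_n -> 'I_n -> 'I_4 -> 'rV[R]_4 -> R)
  (k : 'I_n -> 'I_n -> 'rV[R]_4 -> R) :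
  lie_structure c ->
  (forall a b j, smooth (xi a b j)) ->
  (forall (i j : 'I_4) a b x,
     (mink R i i * partial i (xi a b j) x + mink R j j * partial j (xi a b i) x) / 2
     = mink R i j * k a b x) ->
  (forall a g d j x,
     \sum_(b < n) (xi a b j x * c b g d + c a b g * xi b d j x) = 0) ->
  gen_symmetry c 1
    (fun (i : 'I_4) (a : 'I_n) (p : jet R n) =>
       \sum_(b < n) \sum_(j < 4) xi a b j (jx p) * Fld c i j b p).
Proof.
move=> lie_c xi_smooth xi_conformal xi_equivariant; split.
- exact: xi_Fld_order1.
- by move=> p sp Rp i a; apply: (linYM_xi_Fld lie_c xi_smooth xi_conformal).
Qed.
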